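(* Let $\mathbb{K}$ be an infinite field and $P$ a generic sequence of $n$ homogeneous polynomials in $\mathbb{K}[x_1,\ldots,x_n]$, and let $G_1$ be the reduced Gröbner basis of $\langle P\rangle$ w.r.t. DRL. If the Moreno-Socías conjecture holds, then the number of dense columns of the multiplication matrix $T_1$ equals $|\{g\in G_1:\ x_1\mid\mathrm{lt}(g)\}|$.
   Context: DRL is the degree reverse lexicographic ordering with $x_1<\cdots<x_n$. A property holds for a generic sequence if it holds on a nonempty Zariski-open subset of the coefficient space. Let $B=[\epsilon_1,\ldots,\epsilon_D]$ be the DRL canonical basis of $\mathbb{K}[x_1,\ldots,x_n]/\langle P\rangle$. The $j$-th column of $T_1$ is the coordinate vector of the normal form of $x_1\epsilon_j$. This column is called sparse if $x_1\epsilon_j\in B$ and dense otherwise. A monomial ideal $J$ is weakly reverse lexicographic if, for each minimal generator $\mathbf{t}$, every term of the same total degree greater than $\mathbf{t}$ w.r.t. DRL lies in $J$. Moreno-Socías conjecture: for every infinite field and every generic sequence of $n$ polynomials in $n$ variables, the DRL leading term ideal of the ideal it generates is weakly reverse lexicographic. *)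

From HB Require Import structures.
From mathcomp Require Import all_boot all_order all_algebra.
From mathcomp Require Import mpoly.

Set Implicit Arguments.
Unset Strict Implicit.
Unset Printing Implicit Defensive.
Import GRing.Theory.
Local Open Scope ring_scope.

(* Monomials in k variables x_1,...,x_k are 'X_{1..k}; the exponent of
   x_(i+1) in m is m i (i : 'I_k).  So x_1 is the variable of index 0. *)

(* DRL (degree reverse lexicographic) order with x_1 < ... < x_k:
   a <_DRL b iff deg a < deg b, or deg a = deg b and at the first index
   (starting from x_1, the smallest variable) where a and b differ, the
   exponent in a is larger. *)
Definition drl_lt (k : nat) (a b : 'X_{1..k}) : bool :=
  (mdeg a < mdeg b)%N ||
  ((mdeg a == mdeg b) &&
   [exists i : 'I_k, (b i < a i)%N &&
                     [forall j : 'I_k, (j < i)%N ==> (a j == b j)]]).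

Definition mdivides (k : nat) (a b : 'X_{1..k}) : bool :=
  [forall i : 'I_k, (a i <= b i)%N].

Definition is_lm (K : fieldType) (k : nat) (f : {mpoly K[k]}) (m : 'X_{1..k}) : bool :=
  (m \in msupp f) && all (fun m' => (m' == m) || drl_lt m' m) (msupp f).

Definition in_ideal (K : fieldType) (k s : nat) (P : 'I_s -> {mpoly K[k]})
  (f : {mpoly K[k]}) : Prop :=
  exists q : 'I_s -> {mpoly K[k]}, f = \sum_(i < s) q i * P i.

Definition lt_ideal (K : fieldType) (k s : nat) (P : 'I_s -> {mpoly K[k]})
  (m : 'X_{1..k}) : Prop :=
  exists f, in_ideal P f /\ f != 0 /\ is_lm f m.

Definition minimal_gen (k : nat) (J : 'X_{1..k} -> Prop) (t : 'X_{1..k}) : Prop :=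
  J t /\ forall t', J t' -> mdivides t' t -> t' = t.

Definition weakly_revlex (k : nat) (J : 'X_{1..k} -> Prop) : Prop :=
  forall t, minimal_gen J t ->
  forall m : 'X_{1..k}, mdeg m = mdeg t -> drl_lt t m -> J m.

(* The DRL canonical basis B of K[x]/<P>: monomials outside LT(<P>). *)
Definition in_canonical_basis (K : fieldType) (k s : nat)
  (P : 'I_s -> {mpoly K[k]}) (m : 'X_{1..k}) : Prop := ~ lt_ideal P m.

(* Column of T_1 indexed by eps in B is dense iff x_1 * eps is not in B. *)
Definition dense_column (K : fieldType) (k s : nat)
  (P : 'I_s -> {mpoly K[k.+1]}) (eps : 'X_{1..k.+1}) : Prop :=
  in_canonical_basis P eps /\
  ~ in_canonical_basis P (mnm_add eps (mnm1 (ord0 : 'I_k.+1))).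

Definition is_reduced_GB (K : fieldType) (k s : nat)
  (P : 'I_s -> {mpoly K[k]}) (G : seq {mpoly K[k]}) : Prop :=
  [/\ uniq G,
      (forall g, g \in G -> in_ideal P g /\ g != 0),
      (forall g, g \in G -> exists m, is_lm g m /\ g@_m = 1),
      (forall m, lt_ideal P m ->
         exists2 g, g \in G & exists t, is_lm g t /\ mdivides t m) &
      (forall g g', g \in G -> g' \in G -> g != g' ->
         forall t, is_lm g t -> forall m, m \in msupp g' -> ~~ mdivides t m)].

Definition x1_divides_lt (K : fieldType) (k : nat) (g : {mpoly K[k.+1]}) : bool :=
  has (fun m => is_lm g m && (0 < m ord0)%N) (msupp g).

(* Coefficient index set for a sequence of s homogeneous polynomials in k
   variables of degrees d_1..d_s: pairs (i, m) with m a monomial of degree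
   exactly d i. *)
Definition coef_index (k s : nat) (d : 'I_s -> nat) : predArgType :=
  {p : 'I_s * 'X_{1..k < (\max_(i < s) d i).+1} | mdeg (val p.2) == d p.1}.

Definition hom_seq (K : fieldType) (k s : nat) (d : 'I_s -> nat)
  (c : coef_index k d -> K) (i : 'I_s) : {mpoly K[k]} :=
  \sum_(p : coef_index k d | (val p).1 == i) c p *: 'X_[val (val p).2].

(* A property Q of coefficient vectors (points of K^T, T finite) holds
   generically iff it holds on a nonempty Zariski-open subset, i.e. on the
   complement of the zero set V(S) of some finite family S of polynomials
   in the coordinates, this complement being nonempty. *)
Definition generic (K : fieldType) (T : finType) (Q : (T -> K) -> Prop) : Prop :=
  exists S : seq {mpoly K[#|T|]},
    (exists c : T -> K, has (fun h => h.@[fun j => c (enum_val j)] != 0) S) /\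
    (forall c : T -> K,
       has (fun h => h.@[fun j => c (enum_val j)] != 0) S -> Q c).

Definition infinite_field (K : fieldType) : Prop :=
  ~ exists s : seq K, forall x : K, x \in s.

Definition moreno_socias_conjecture : Prop :=
  forall (L : fieldType), infinite_field L ->
  forall (k : nat) (d : 'I_k -> nat),
    generic (fun c : coef_index k d -> L => weakly_revlex (lt_ideal (hom_seq c))).

From HB Require Import structures.
From mathcomp Require Import all_boot all_order all_algebra.
From mathcomp Require Import mpoly.
From Stdlib Require Import Classical.

Set Implicit Arguments.
Unset Strict Implicit.
Unset Printing Implicit Defensive.
Import GRing.Theory.
Local Open Scope ring_scope.

(* Sending g to lt(g)/x_1 is a bijection from the g in G with x_1 | lt(g)
   onto the monomials eps in B with x_1 eps notin B.  Leading terms of a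
   reduced Groebner basis are exactly the minimal generators of LT(<P>),
   pairwise non-dividing, which gives injectivity and that lt(g)/x_1 is in
   B.  Conversely, if x_1 eps is in LT(<P>), some lt(g) divides it; were
   lt(g) a proper divisor, then either lt(g) | eps, or lt(g) has the full
   x_1-exponent of x_1 eps and is smaller in some x_j, j > 1, so that the
   monomial lt(g) x_j / x_1 of the same degree divides eps.  That monomial
   is DRL-larger than lt(g), hence lies in LT(<P>) by the weak reverse
   lexicographic property: either way eps is not in B. *)

Section Monomials.
Variable k : nat.
Implicit Types a b c w : 'X_{1..k}.

Lemma drl_lt_asym a b : drl_lt a b -> drl_lt b a -> False.
Proof.
rewrite /drl_lt => /orP [ltab|/andP [/eqP eab /existsP [i /andP [lti /forallP eqi]]]]
   /orP [ltba|/andP [/eqP eba /existsP [i' /andP [lti' /forallP eqi']]]].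
- by move: (ltn_trans ltab ltba); rewrite ltnn.
- by move: ltab; rewrite eba ltnn.
- by move: ltba; rewrite eab ltnn.
- case: (ltngtP i i') => cmp_ii'.
  + by move: (eqi' i); rewrite cmp_ii' /= => /eqP e; move: lti; rewrite e ltnn.
  + by move: (eqi i'); rewrite cmp_ii' /= => /eqP e; move: lti'; rewrite e ltnn.
  + move/val_inj: cmp_ii' => eq_ii'; subst i'.
    by move: (ltn_trans lti lti'); rewrite ltnn.
Qed.

Lemma drl_lt_add2l w a b : drl_lt a b -> drl_lt (w + a)%MM (w + b)%MM.
Proof.
rewrite /drl_lt !mdegD ltn_add2l eqn_add2l.
case/orP => [->//|/andP [-> /existsP [i /andP [lti /forallP eqi]]]].
apply/orP; right; apply/existsP; exists i; rewrite !mnmDE ltn_add2l lti /=.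
by apply/forallP => j; apply/implyP => /(implyP (eqi j)); rewrite !mnmDE eqn_add2l.
Qed.

Lemma mdividesE a b : mdivides a b = (a <= b)%MM.
Proof. exact/forallP/mnm_lepP. Qed.

Lemma mdivides_trans a b c : mdivides a b -> mdivides b c -> mdivides a c.
Proof. by rewrite !mdividesE => /lepm_trans le_ab /le_ab. Qed.

Lemma mdivides_anti a b : mdivides a b -> mdivides b a -> a = b.
Proof.
rewrite !mdividesE => /mnm_lepP leab /mnm_lepP leba.
by apply/mnmP => i; apply/eqP; rewrite eqn_leq leab leba.
Qed.

Lemma is_lm_uniq (K : fieldType) (f : {mpoly K[k]}) a b :
  is_lm f a -> is_lm f b -> a = b.
Proof.
move=> /andP [suppa /allP maxa] /andP [suppb /allP maxb].
case/orP: (maxa _ suppb) => [/eqP//|ltba].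
case/orP: (maxb _ suppa) => [/eqP//|ltab].
by case: (drl_lt_asym ltba ltab).
Qed.

Lemma is_lmMX (K : fieldType) (f : {mpoly K[k]}) a w :
  is_lm f a -> is_lm (f * 'X_[w]) (w + a)%MM.
Proof.
move=> /andP [suppa /allP maxa]; apply/andP; split.
  by rewrite mcoeff_msupp mcoeffMX -mcoeff_msupp.
apply/allP => m; rewrite (perm_mem (msuppMX _ _)) => /mapP [m' suppm' ->].
case/orP: (maxa _ suppm') => [/eqP->|lt_m'a]; first by rewrite eqxx.
by rewrite drl_lt_add2l ?orbT.
Qed.

Lemma lt_ideal_mdivides (K : fieldType) s (P : 'I_s -> {mpoly K[k]}) a b :
  lt_ideal P a -> mdivides a b -> lt_ideal P b.
Proof.
move=> [f [[q ->] [nz_f lm_f]]]; rewrite mdividesE => leab.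
exists ((\sum_(i < s) q i * P i) * 'X_[b - a]); split; [|split].
- exists (fun i => q i * 'X_[b - a]); rewrite mulr_suml.
  by apply: eq_bigr => i _; rewrite mulrAC.
- apply: contraTneq (lm_f) => /(congr1 (fun p => p@_((b - a) + a)%MM)).
  by rewrite mcoeffMX mcoeff0 /is_lm mcoeff_msupp => ->; rewrite eqxx.
- by rewrite -[in X in is_lm _ X](submK leab); apply: is_lmMX.
Qed.

End Monomials.

Section FirstVariable.
Variable n : nat.
Implicit Types t eps : 'X_{1..n.+1}.
Local Notation x1 := (U_(ord0 : 'I_n.+1))%MM.

Lemma x1_lepm t : (0 < t ord0)%N -> (x1 <= t)%MM.
Proof. by rewrite lep1mP -lt0n. Qed.

Lemma drl_lt_trade_x1 t (j : 'I_n.+1) : (0 < t ord0)%N -> j != ord0 ->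
  mdeg (t - x1 + U_(j))%MM = mdeg t /\ drl_lt t (t - x1 + U_(j))%MM.
Proof.
move=> t0_gt0 nz_j.
have deg_trade : mdeg (t - x1 + U_(j))%MM = mdeg t.
  by rewrite -{2}(submK (x1_lepm t0_gt0)) !mdegD !mdeg1.
split=> //; rewrite /drl_lt deg_trade ltnn eqxx /=.
apply/existsP; exists ord0; apply/andP; split; last first.
  by apply/forallP => i; rewrite ltn0.
by rewrite mnmDE mnmBE !mnm1E eqxx (negbTE nz_j) addn0 subn1 ltn_predL.
Qed.

Lemma mdivides_mulx1 t eps :
  mdivides t (eps + x1)%MM -> t != (eps + x1)%MM ->
  mdivides t eps \/
  exists2 j : 'I_n.+1, j != ord0 &
    (0 < t ord0)%N /\ mdivides (t - x1 + U_(j))%MM eps.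
Proof.
rewrite !mdividesE => /mnm_lepP t_le neq_t.
have t_le_eps i : i != ord0 -> (t i <= eps i)%N.
  by move=> nz_i; move: (t_le i); rewrite mnmDE mnm1E eq_sym (negbTE nz_i) addn0.
have := t_le ord0; rewrite mnmDE mnm1E eqxx addn1 leq_eqVlt ltnS.
case/orP=> [/eqP t0_eq|t0_le]; last first.
  left; apply/mnm_lepP => i.
  by case: (eqVneq i ord0) => [->|]; [exact: t0_le | exact: t_le_eps].
right; case: (pickP (fun j => t j != (eps + x1)%MM j)) => [j neq_tj|all_eq]; last first.
  by case/eqP: neq_t; apply/mnmP => j; apply/eqP/negbFE/all_eq.
have nz_j : j != ord0.
  by apply: contraNneq neq_tj => ->; rewrite t0_eq mnmDE mnm1E eqxx addn1.
have lt_tj : (t j < eps j)%N.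
  move: neq_tj; rewrite mnmDE mnm1E [ord0 == j]eq_sym (negbTE nz_j) addn0.
  by rewrite ltn_neqAle => ->; apply: t_le_eps.
exists j => //; split; first by rewrite t0_eq.
apply/mnm_lepP => i; rewrite mnmDE mnmBE !mnm1E.
case: (eqVneq i ord0) => [->|nz_i]; first by rewrite (negbTE nz_j) t0_eq subn1 addn0.
rewrite subn0.
by case: (eqVneq j i) => [<-|_]; rewrite ?addn1 ?addn0 //; apply: t_le_eps.
Qed.

End FirstVariable.

Section ReducedGroebnerBasis.
Variables (K : fieldType) (n s : nat) (P : 'I_s -> {mpoly K[n.+1]}).
Variable G : seq {mpoly K[n.+1]}.
Hypothesis G_reduced : is_reduced_GB P G.
Local Notation J := (lt_ideal P).
Local Notation x1 := (U_(ord0 : 'I_n.+1))%MM.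

Definition lm (g : {mpoly K[n.+1]}) : 'X_{1..n.+1} :=
  nth 0%MM (msupp g) (find (is_lm g) (msupp g)).

Lemma lm_is_lm g m : is_lm g m -> lm g = m.
Proof.
move=> lm_g; apply: (is_lm_uniq _ lm_g); apply: (nth_find _ (a := is_lm g)).
by apply/hasP; exists m => //; case/andP: lm_g.
Qed.

Lemma is_lm_lm g : g \in G -> is_lm g (lm g).
Proof.
by case: G_reduced => _ _ monic _ _ /monic [m [lm_g _]]; rewrite (lm_is_lm lm_g).
Qed.

Lemma lt_ideal_lm g : g \in G -> J (lm g).
Proof.
move=> Gg; case: G_reduced => _ in_ideal_G _ _ _.
have [Pg nz_g] := in_ideal_G _ Gg.
by exists g; split; [|split; last exact: is_lm_lm].
Qed.

Lemma lm_mdivides m : J m -> exists2 g, g \in G & mdivides (lm g) m.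
Proof.
case: G_reduced => _ _ _ cover _ /cover [g Gg [t [lm_g dvd_t]]].
by exists g; rewrite ?(lm_is_lm lm_g).
Qed.

Lemma lm_mdivides_inj g g' :
  g \in G -> g' \in G -> mdivides (lm g) (lm g') -> g = g'.
Proof.
move=> Gg Gg' dvd_lm; apply: contraTeq isT => neq_gg'.
case: G_reduced => _ _ _ _ reduced; case/andP: (is_lm_lm Gg') => supp_lm _.
by move: (reduced _ _ Gg Gg' neq_gg' _ (is_lm_lm Gg) _ supp_lm); rewrite dvd_lm.
Qed.

Lemma minimal_gen_lm g : g \in G -> minimal_gen J (lm g).
Proof.
move=> Gg; split=> [|t Jt dvd_t]; first exact: lt_ideal_lm.
have [g' Gg' dvd_g'] := lm_mdivides Jt.
have eq_g' := lm_mdivides_inj Gg' Gg (mdivides_trans dvd_g' dvd_t).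
by apply: mdivides_anti; rewrite // -eq_g'.
Qed.

Lemma x1_divides_ltE g : g \in G -> x1_divides_lt g = (0 < lm g ord0)%N.
Proof.
move=> Gg; apply/hasP/idP => [[m _ /andP [lm_g m0_gt0]]|lm0_gt0].
  by rewrite (lm_is_lm lm_g).
by exists (lm g); [case/andP: (is_lm_lm Gg) | rewrite is_lm_lm].
Qed.

Definition dense_columns : seq 'X_{1..n.+1} :=
  [seq (lm g - x1)%MM | g <- G & x1_divides_lt g].

Lemma uniq_dense_columns : uniq dense_columns.
Proof.
rewrite map_inj_in_uniq; first by apply: filter_uniq; case: G_reduced.
move=> g g'; rewrite !mem_filter => /andP [x1g Gg] /andP [x1g' Gg'] eq_quot.
rewrite (x1_divides_ltE Gg) in x1g; rewrite (x1_divides_ltE Gg') in x1g'.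
apply: (lm_mdivides_inj Gg Gg'); rewrite mdividesE.
by rewrite -(submK (x1_lepm x1g)) -(submK (x1_lepm x1g')) eq_quot lepm_refl.
Qed.

Lemma dense_column_quot_lm g :
  g \in G -> (0 < lm g ord0)%N -> dense_column P (lm g - x1)%MM.
Proof.
move=> Gg lm0_gt0.
rewrite /dense_column /in_canonical_basis (submK (x1_lepm lm0_gt0)).
split=> [/lm_mdivides [g' Gg' dvd_g']|]; last by apply; exact: lt_ideal_lm.
have dvd_lm : mdivides (lm g') (lm g).
  apply: (mdivides_trans dvd_g'); rewrite mdividesE.
  by apply/mnm_lepP => i; rewrite mnmBE leq_subr.
move: dvd_g'; rewrite (lm_mdivides_inj Gg' Gg dvd_lm) mdividesE => /mnm_lepP/(_ ord0).
by rewrite mnmBE mnm1E eqxx subn1 -ltnS prednK // ltnn.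
Qed.

Lemma dense_column_lm :
  weakly_revlex J -> forall eps, dense_column P eps ->
  exists2 g, g \in G & lm g = (eps + x1)%MM.
Proof.
move=> revlex eps [B_eps /NNPP J_x1eps].
have [g Gg dvd_g] := lm_mdivides J_x1eps.
exists g => //; apply/eqP; apply: contraT => neq_lm; case: B_eps.
case: (mdivides_mulx1 dvd_g neq_lm) => [|[j nz_j [lm0_gt0 dvd_trade]]].
  exact: lt_ideal_mdivides (lt_ideal_lm Gg).
have [deg_trade lt_trade] := drl_lt_trade_x1 lm0_gt0 nz_j.
exact: lt_ideal_mdivides (revlex _ (minimal_gen_lm Gg) _ deg_trade lt_trade) dvd_trade.
Qed.

Lemma mem_dense_columns :
  weakly_revlex J -> forall eps, eps \in dense_columns <-> dense_column P eps.
Proof.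
move=> revlex eps; split.
  case/mapP => g; rewrite mem_filter => /andP [x1g Gg] ->.
  by apply: dense_column_quot_lm; rewrite -?x1_divides_ltE.
case/(dense_column_lm revlex) => g Gg lm_g.
apply/mapP; exists g; last by rewrite lm_g addmK.
by rewrite mem_filter Gg (x1_divides_ltE Gg) lm_g mnmDE mnm1E eqxx addn1.
Qed.

Lemma size_dense_columns : size dense_columns = count (@x1_divides_lt K n) G.
Proof. by rewrite size_map size_filter. Qed.

End ReducedGroebnerBasis.

Theorem corollary6p7 (K : fieldType) (n : nat) (d : 'I_n.+1 -> nat) :
  infinite_field K ->
  moreno_socias_conjecture ->
  generic (fun c : coef_index n.+1 d -> K =>
    forall G : seq {mpoly K[n.+1]}, is_reduced_GB (hom_seq c) G ->
    exists cols : seq 'X_{1..n.+1},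
      [/\ uniq cols,
          (forall eps, eps \in cols <-> dense_column (hom_seq c) eps) &
          size cols = count (@x1_divides_lt K n) G]).
Proof.
move=> infK moreno_socias; have [S [S_nonempty S_revlex]] := moreno_socias K infK n.+1 d.
exists S; split=> // c S_c G G_reduced; exists (dense_columns G).
split; first exact: uniq_dense_columns G_reduced.
- exact: mem_dense_columns G_reduced (S_revlex c S_c).
- exact: size_dense_columns.
Qed.
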